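(* Let $\mathcal{X}=[0,1]$, $0<\gamma<\tfrac12$, $L>0$, and let $d$ be an integer with $1\le d\le\left|\mathsf{C}\!\left([0,1],|\cdot|,\sqrt{32/\pi}\cdot\frac{\gamma}{L}\right)\right|$. There exists a class $\mathcal{F}\subseteq[-1,1]^{[0,1]}$ of $L$-Lipschitz functions (w.r.t. $|\cdot|$) with $\mathsf{vc}(\mathcal{F})=d$ such that for any (possibly randomized) online learner there exists a sequence $(x_1,y_1),\dots,(x_T,y_T)\in[0,1]\times\{-1,+1\}$ with $$\sum_{t=1}^T\mathbb{E}\,\mathbb{1}[\hat y_t\neq y_t]-\mathsf{OPT}^{\gamma}_{\mathrm{margin}}\ge\Omega\!\left(\sqrt{T\cdot\mathsf{vc}(\mathcal{F})\ln\!\left(\frac{\left|\mathsf{C}\!\left([0,1],|\cdot|,\sqrt{32/\pi}\cdot\frac{\gamma}{L}\right)\right|}{\mathsf{vc}(\mathcal{F})}\right)}\right),$$ where $\mathsf{OPT}^{\gamma}_{\mathrm{margin}}=\min_{f\in\mathcal{F}}\sum_{t=1}^T\mathbb{1}[y_tf(x_t)\le\gamma]$.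
   Context: Online binary classification: on rounds $t=1,\dots,T$ the adversary reveals $x_t$, the learner outputs $\hat y_t\in\{-1,+1\}$, then $y_t$ is revealed; the expectation is over the learner's randomness. $\mathsf{vc}(\mathcal{F})$ is the pseudo-dimension of $\mathcal{F}$. $|\mathsf{C}([0,1],|\cdot|,r)|$ is the minimal number of points of $[0,1]$ such that every point of $[0,1]$ is within distance $r$ of one of them. $\Omega(\cdot)$ hides a positive absolute constant. *)

From Stdlib Require Import Reals Lra List ClassicalEpsilon.
Open Scope R_scope.

(* least natural number satisfying P (arbitrary if none exists) *)
Definition nat_min (P : nat -> Prop) : nat :=
  epsilon (inhabits 0%nat) (fun n => P n /\ forall m, P m -> (n <= m)%nat).

Definition in01 (x : R) : Prop := 0 <= x <= 1.

Definition covering_number01 (r : R) : nat :=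
  nat_min (fun n => exists S : list R, length S = n /\
     (forall s, In s S -> in01 s) /\
     (forall x, in01 x -> exists s, In s S /\ Rabs (x - s) <= r)).

Definition pshatters (F : (R -> R) -> Prop) (n : nat) : Prop :=
  exists (xs rs : nat -> R),
    (forall i, (i < n)%nat -> in01 (xs i)) /\
    forall b : nat -> bool, exists f, F f /\
      forall i, (i < n)%nat -> (rs i <= f (xs i) <-> b i = true).

Definition pdim_eq (F : (R -> R) -> Prop) (d : nat) : Prop :=
  pshatters F d /\ forall n, pshatters F n -> (n <= d)%nat.

Fixpoint sumR (n : nat) (g : nat -> R) : R :=
  match n with O => 0 | S k => sumR k g + g k end.

Definition lab (y : bool) : R := if y then 1 else -1.

(* A (possibly randomized) online learner: given the history of labelled
   examples and the current instance, the probability that it predicts +1.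
   For a fixed sequence this captures every randomized learner. *)
Definition learner := list (R * bool) -> R -> R.

Definition valid_learner (A : learner) : Prop :=
  forall h x, 0 <= A h x <= 1.

Definition history (xs : nat -> R) (ys : nat -> bool) (t : nat) : list (R * bool) :=
  map (fun s => (xs s, ys s)) (seq 0 t).

Definition exp_mistake (A : learner) (xs : nat -> R) (ys : nat -> bool) (t : nat) : R :=
  let p := A (history xs ys t) (xs t) in
  if ys t then 1 - p else p.

Definition expected_mistakes (A : learner) (xs : nat -> R) (ys : nat -> bool) (T : nat) : R :=
  sumR T (exp_mistake A xs ys).

Definition margin_loss (gamma : R) (f : R -> R) (xs : nat -> R) (ys : nat -> bool) (T : nat) : nat :=
  length (filter (fun t => if Rle_dec (lab (ys t) * f (xs t)) gamma then true else false)
                 (seq 0 T)).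

Definition OPT_margin (F : (R -> R) -> Prop) (gamma : R) (xs : nat -> R) (ys : nat -> bool) (T : nat) : nat :=
  nat_min (fun k => exists f, F f /\ margin_loss gamma f xs ys T = k).

From Stdlib Require Import Reals Lra Lia List Wf_nat ZArith ClassicalEpsilon Classical.
Open Scope R_scope.

(* Cut [0,1] into [d] cells and give each cell an [L]-Lipschitz "ramp", a clipped
   threshold function whose threshold is the only free parameter; on one cell the
   resulting class is totally ordered, so its pseudo-dimension is [d].  The adversary
   spends [D ~ log2 (N/d)] phases of [m = T/(dD)] rounds on each cell and performs a
   binary search for the threshold, one query point per phase, each step following the
   majority label of the phase.  The ramps with the final thresholds predict every
   majority with margin [5/4 gamma > gamma], so OPT is at most the number of minority
   labels, [sum_p (m - |S_p|)/2].  Labels are chosen greedily to keep a potential from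
   decreasing: the learner's expected mistakes minus [t/2], plus half of [E |S_p|] for
   every phase were its remaining labels fair coins.  Since [E |S_m| >= 5/9 sqrt m],
   the regret is at least [5/18 dD sqrt m >= 1/10 sqrt (T d ln (N/d))].  When [N = d]
   the bound is [0] and a class lifted above the margin suffices. *)

Lemma nat_min_le (P : nat -> Prop) (n : nat) : P n -> (nat_min P <= n)%nat.
Proof.
  intros Pn. unfold nat_min.
  assert (Hleast : exists k, P k /\ forall j, P j -> (k <= j)%nat).
  { destruct (dec_inh_nat_subset_has_unique_least_element P (fun k => classic (P k)))
      as [k [Hk _]]; eauto. }
  destruct (epsilon_spec (inhabits 0%nat) _ Hleast) as [_ Hmin]. auto.
Qed.

Lemma sumR_ext (n : nat) (f g : nat -> R) :
  (forall k, (k < n)%nat -> f k = g k) -> sumR n f = sumR n g.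
Proof. induction n; simpl; intros H; auto. rewrite IHn, H by (auto; lia). reflexivity. Qed.

Lemma sumR_add (n : nat) (f g : nat -> R) :
  sumR n (fun k => f k + g k) = sumR n f + sumR n g.
Proof. induction n; simpl; [lra|]. rewrite IHn; lra. Qed.

Lemma sumR_scal (n : nat) (a : R) (f : nat -> R) : sumR n (fun k => a * f k) = a * sumR n f.
Proof. induction n; simpl; [lra|]. rewrite IHn; lra. Qed.

Lemma sumR_const (n : nat) (a : R) : sumR n (fun _ => a) = INR n * a.
Proof. induction n; simpl sumR; [simpl; lra|]. rewrite IHn, S_INR; lra. Qed.

Lemma sumR_le (n : nat) (f g : nat -> R) :
  (forall k, (k < n)%nat -> f k <= g k) -> sumR n f <= sumR n g.
Proof.
  induction n; simpl; intros H; [lra|].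
  pose proof (H n ltac:(lia)). pose proof (IHn ltac:(intros; apply H; lia)). lra.
Qed.

Lemma sumR_ge0 (n : nat) (f : nat -> R) : (forall k, (k < n)%nat -> 0 <= f k) -> 0 <= sumR n f.
Proof. intros H. rewrite <- (Rmult_0_r (INR n)), <- sumR_const. apply sumR_le; auto. Qed.

Lemma sumR_add_range (a b : nat) (g : nat -> R) :
  sumR (a + b) g = sumR a g + sumR b (fun j => g (a + j)%nat).
Proof.
  induction b; simpl; [rewrite Nat.add_0_r; lra|].
  rewrite Nat.add_succ_r; simpl. rewrite IHb; lra.
Qed.

Lemma sumR_mul_range (n m : nat) (g : nat -> R) :
  sumR (n * m) g = sumR n (fun p => sumR m (fun j => g (p * m + j)%nat)).
Proof. induction n; simpl; auto. rewrite Nat.add_comm, sumR_add_range, IHn. reflexivity. Qed.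

Lemma sumR_single (n k : nat) (g : nat -> R) :
  (k < n)%nat -> (forall j, (j < n)%nat -> j <> k -> g j = 0) -> sumR n g = g k.
Proof.
  induction n; intros Hk H; [lia|]. simpl.
  destruct (Nat.eq_dec k n) as [->|Hne].
  - rewrite (sumR_ext n g (fun _ => 0)), sumR_const; [lra|].
    intros j Hj; apply H; lia.
  - rewrite IHn, (H n) by (try lia; intros; apply H; lia). lra.
Qed.

Lemma margin_loss_sumR (gamma : R) (f : R -> R) (xs : nat -> R) (ys : nat -> bool) (T : nat) :
  INR (margin_loss gamma f xs ys T) =
  sumR T (fun t => if Rle_dec (lab (ys t) * f (xs t)) gamma then 1 else 0).
Proof.
  unfold margin_loss. induction T; simpl sumR; auto.
  rewrite seq_S, filter_app, length_app, plus_INR, IHT. simpl.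
  destruct (Rle_dec _ _); simpl; lra.
Qed.

(** * Covering numbers of [0,1] *)

Lemma exists_nat_between (x : R) : 0 < x -> exists m : nat, (1 <= m)%nat /\ x <= INR m <= x + 1.
Proof.
  intros Hx. destruct (archimed x) as [Hup1 Hup2].
  assert (Hpos : (0 < up x)%Z) by (apply lt_IZR; lra).
  exists (Z.to_nat (up x)).
  rewrite INR_IZR_INZ, Z2Nat.id by lia. split; [lia | lra].
Qed.

Lemma midpoint_cover (r : R) (n : nat) (x : R) : 0 < r -> 0 <= x <= 1 -> x <= 2 * r * INR (S n) ->
  exists j, (j <= n)%nat /\ Rabs (x - Rmin 1 ((2 * INR j + 1) * r)) <= r.
Proof.
  intros Hr Hx. induction n as [|n IH]; intros Hxn.
  - exists 0%nat. split; [lia|]. simpl in *. unfold Rmin. destruct Rle_dec; apply Rabs_le; lra.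
  - destruct (Rle_dec x (2 * r * INR (S n))) as [Hle|Hgt].
    + destruct (IH Hle) as [j [Hj Hcov]]. exists j; split; [lia | exact Hcov].
    + exists (S n). split; [lia|]. rewrite !S_INR in *.
      unfold Rmin. destruct Rle_dec; apply Rabs_le; nra.
Qed.

Lemma covering_number01_le (r : R) : 0 < r -> INR (covering_number01 r) <= 1 + / (2 * r).
Proof.
  intros Hr. assert (Hinv : 0 < / (2 * r)) by (apply Rinv_0_lt_compat; lra).
  destruct (exists_nat_between _ Hinv) as [m [Hm [Hm1 Hm2]]].
  assert (Hcover : 1 <= 2 * r * INR m).
  { apply Rmult_le_compat_l with (r := 2 * r) in Hm1; [|lra].
    rewrite Rinv_r in Hm1; lra. }
  enough (covering_number01 r <= m)%nat by (apply le_INR in H; lra).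
  apply nat_min_le.
  exists (map (fun j => Rmin 1 ((2 * INR j + 1) * r)) (seq 0 m)). split; [|split].
  - now rewrite length_map, length_seq.
  - intros s Hs. apply in_map_iff in Hs. destruct Hs as [j [<- _]]. unfold in01, Rmin.
    pose proof (pos_INR j). destruct Rle_dec; nra.
  - intros x Hx. destruct m as [|m']; [lia|].
    destruct (midpoint_cover r m' x Hr Hx) as [j [Hj Hcov]]; [destruct Hx; lra|].
    exists (Rmin 1 ((2 * INR j + 1) * r)). split; [|exact Hcov].
    apply in_map_iff. exists j. split; [reflexivity|]. apply in_seq. lia.
Qed.

(** * A class of Lipschitz ramps *)

Lemma Rabs_le_inv (x b : R) : Rabs x <= b -> - b <= x <= b.
Proof. unfold Rabs; destruct Rcase_abs; lra. Qed.

Lemma Rmax_lipschitz (u v u' v' K : R) :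
  Rabs (u - u') <= K -> Rabs (v - v') <= K -> Rabs (Rmax u v - Rmax u' v') <= K.
Proof.
  intros H1%Rabs_le_inv H2%Rabs_le_inv. apply Rabs_le.
  unfold Rmax; repeat destruct Rle_dec; lra.
Qed.

Lemma Rmin_lipschitz (u v u' v' K : R) :
  Rabs (u - u') <= K -> Rabs (v - v') <= K -> Rabs (Rmin u v - Rmin u' v') <= K.
Proof.
  intros H1%Rabs_le_inv H2%Rabs_le_inv. apply Rabs_le.
  unfold Rmin; repeat destruct Rle_dec; lra.
Qed.

Lemma Rabs_scal_sub (L x y : R) : 0 < L -> Rabs (L * x - L * y) = L * Rabs (x - y).
Proof. intros HL. rewrite <- Rmult_minus_distr_l, Rabs_mult, (Rabs_pos_eq L); lra. Qed.

Section RampFunctions.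

Variables (L beta : R).
Hypotheses (HL : 0 < L) (Hbeta : 0 <= beta).

Definition bump (a W x : R) : R :=
  Rmax 0 (Rmin beta (Rmin (L * (x - a)) (L * (a + W - x)))).

Definition ramp (a W c x : R) : R :=
  Rmax (- bump a W x) (Rmin (bump a W x) (L * (x - c))).

Lemma bump_range (a W x : R) : 0 <= bump a W x <= beta.
Proof. unfold bump, Rmax, Rmin; repeat destruct Rle_dec; lra. Qed.

Lemma bump_out (a W x : R) : x <= a \/ a + W <= x -> bump a W x = 0.
Proof.
  intros Hx. assert (L * (x - a) <= 0 \/ L * (a + W - x) <= 0) by (destruct Hx; [left|right]; nra).
  unfold bump, Rmax, Rmin; repeat destruct Rle_dec; lra.
Qed.

Lemma bump_lipschitz (a W x y : R) : Rabs (bump a W x - bump a W y) <= L * Rabs (x - y).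
Proof.
  assert (0 <= L * Rabs (x - y)) by (pose proof (Rabs_pos (x - y)); nra).
  unfold bump. apply Rmax_lipschitz; [rewrite Rminus_diag, Rabs_R0; lra|].
  apply Rmin_lipschitz; [rewrite Rminus_diag, Rabs_R0; lra|].
  apply Rmin_lipschitz; rewrite Rabs_scal_sub by exact HL;
    [| rewrite <- Rabs_Ropp]; apply Req_le; do 2 f_equal; ring.
Qed.

Lemma ramp_abs_le (a W c x : R) : Rabs (ramp a W c x) <= bump a W x.
Proof.
  pose proof (bump_range a W x). apply Rabs_le.
  unfold ramp, Rmax, Rmin; repeat destruct Rle_dec; lra.
Qed.

Lemma ramp_out (a W c x : R) : x <= a \/ a + W <= x -> ramp a W c x = 0.
Proof.
  intros Hx. unfold ramp. rewrite bump_out by exact Hx.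
  unfold Rmax, Rmin; repeat destruct Rle_dec; lra.
Qed.

Lemma ramp_lipschitz (a W c x y : R) : Rabs (ramp a W c x - ramp a W c y) <= L * Rabs (x - y).
Proof.
  pose proof (bump_lipschitz a W x y). unfold ramp. apply Rmax_lipschitz.
  - rewrite <- Rabs_Ropp. replace (- (- bump a W x - - bump a W y)) with
      (bump a W x - bump a W y) by ring. exact H.
  - apply Rmin_lipschitz; [exact H|]. rewrite Rabs_scal_sub by exact HL.
    apply Req_le. do 2 f_equal. ring.
Qed.

Lemma ramp_antitone (a W c c' x : R) : c <= c' -> ramp a W c' x <= ramp a W c x.
Proof.
  intros Hc. assert (L * (x - c') <= L * (x - c)) by nra.
  unfold ramp, Rmax, Rmin; repeat destruct Rle_dec; lra.
Qed.

(* A ramp is [L]-Lipschitz and vanishes at both ends of its cell. *)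
Lemma ramp_abs_le_ends (a W c x : R) : a <= x <= a + W ->
  Rabs (ramp a W c x) <= L * (a + W - x) /\ Rabs (ramp a W c x) <= L * (x - a).
Proof.
  intros Hx.
  pose proof (ramp_lipschitz a W c x (a + W)) as Hr.
  pose proof (ramp_lipschitz a W c x a) as Hl.
  rewrite (ramp_out a W c (a + W)) in Hr by (right; lra).
  rewrite (ramp_out a W c a) in Hl by (left; lra).
  rewrite Rminus_0_r, (Rabs_left1 (x - (a + W))) in Hr by lra.
  rewrite Rminus_0_r, (Rabs_pos_eq (x - a)) in Hl by lra.
  split; [replace (a + W - x) with (- (x - (a + W))) by ring|]; assumption.
Qed.

End RampFunctions.

Section Cells.

Variable d : nat.
Hypothesis Hd : (1 <= d)%nat.

Definition cell_left (k : nat) : R := INR k / INR d.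

Lemma INR_d_pos : 0 < INR d.
Proof. apply lt_0_INR; lia. Qed.

Lemma cell_width_pos : 0 < / INR d.
Proof. exact (Rinv_0_lt_compat _ INR_d_pos). Qed.

Lemma cell_left_S (k : nat) : cell_left k + / INR d = cell_left (S k).
Proof. pose proof INR_d_pos. unfold cell_left. rewrite S_INR. field. lra. Qed.

Lemma cell_left_le (j k : nat) : (j <= k)%nat -> cell_left j <= cell_left k.
Proof.
  intros Hjk. unfold cell_left, Rdiv. apply Rmult_le_compat_r.
  - exact (Rlt_le _ _ cell_width_pos).
  - now apply le_INR.
Qed.

Lemma cell_in01 (k : nat) : (k < d)%nat -> 0 <= cell_left k /\ cell_left k + / INR d <= 1.
Proof.
  intros Hk. rewrite cell_left_S. pose proof INR_d_pos.
  pose proof (cell_left_le 0 k ltac:(lia)). pose proof (cell_left_le (S k) d Hk).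
  unfold cell_left in *. replace (INR d / INR d) with 1 in * by (field; lra).
  simpl in *. unfold Rdiv in *. lra.
Qed.

Lemma exists_cell (x : R) : in01 x -> exists k, (k < d)%nat /\ cell_left k <= x <= cell_left k + / INR d.
Proof.
  intros [Hx0 Hx1].
  enough (Hn : forall n, (1 <= n)%nat -> x <= cell_left n ->
            exists k, (k < n)%nat /\ cell_left k <= x <= cell_left k + / INR d).
  { apply (Hn d Hd). unfold cell_left. pose proof INR_d_pos.
    replace (INR d / INR d) with 1 by (field; lra). exact Hx1. }
  induction n as [|n IH]; intros Hn Hxn; [lia|]. rewrite <- cell_left_S in Hxn.
  destruct (Nat.eq_dec n 0) as [->|Hn0].
  - exists 0%nat. split; [lia|].
    assert (cell_left 0 = 0) by (unfold cell_left; simpl; unfold Rdiv; ring). lra.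
  - destruct (Rle_dec x (cell_left n)) as [Hle|Hlt].
    + destruct (IH ltac:(lia) Hle) as [k [Hk Hkx]]. exists k; split; [lia | exact Hkx].
    + exists n. split; [lia | lra].
Qed.

Lemma other_cells_out (j k : nat) (x : R) : cell_left k <= x <= cell_left k + / INR d -> j <> k ->
  x <= cell_left j \/ cell_left j + / INR d <= x.
Proof.
  intros Hx Hjk. destruct (proj1 (Nat.lt_gt_cases j k) Hjk) as [Hlt|Hgt].
  - right. pose proof (cell_left_le (S j) k Hlt). rewrite <- cell_left_S in H. lra.
  - left. pose proof (cell_left_le (S k) j Hgt). rewrite <- cell_left_S in H. lra.
Qed.

End Cells.

Lemma pigeonhole (n d : nat) (g : nat -> nat) :
  (forall i, (i < n)%nat -> (g i < d)%nat) -> (d < n)%nat ->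
  exists i j, (i < n)%nat /\ (j < n)%nat /\ i <> j /\ g i = g j.
Proof.
  intros Hg Hdn. apply NNPP. intros Hinj.
  assert (Hnodup : NoDup (map g (seq 0 n))).
  { apply NoDup_map_NoDup_ForallPairs; [|apply seq_NoDup].
    intros i j Hi Hj Heq. apply in_seq in Hi, Hj.
    destruct (Nat.eq_dec i j) as [|Hij]; [assumption|].
    exfalso. apply Hinj. exists i, j. repeat split; (assumption || lia). }
  assert (Hincl : incl (map g (seq 0 n)) (seq 0 d)).
  { intros k Hk. apply in_map_iff in Hk. destruct Hk as [i [<- Hi]].
    apply in_seq in Hi. apply in_seq. specialize (Hg i ltac:(lia)). lia. }
  pose proof (NoDup_incl_length Hnodup Hincl) as Hlen.
  rewrite length_map, !length_seq in Hlen. lia.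
Qed.

Section RampClass.

Variables (o L beta : R) (d : nat).
Hypotheses (HL : 0 < L) (Hbeta : 0 < beta) (Hd : (1 <= d)%nat).
Let Hbeta0 : 0 <= beta := Rlt_le _ _ Hbeta.

Definition ramp_sum (c : nat -> R) (x : R) : R :=
  o + sumR d (fun k => ramp L beta (cell_left d k) (/ INR d) (c k) x).

Definition ramp_class (f : R -> R) : Prop := exists c, f = ramp_sum c.

Lemma ramp_sum_cell (c : nat -> R) (k : nat) (x : R) :
  (k < d)%nat -> cell_left d k <= x <= cell_left d k + / INR d ->
  ramp_sum c x = o + ramp L beta (cell_left d k) (/ INR d) (c k) x.
Proof.
  intros Hk Hx. unfold ramp_sum. f_equal.
  apply (sumR_single d k (fun j => ramp L beta (cell_left d j) (/ INR d) (c j) x) Hk).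
  intros j _ Hjk. apply (ramp_out L beta HL Hbeta0). exact (other_cells_out d Hd j k x Hx Hjk).
Qed.

Lemma ramp_sum_range (c : nat -> R) (x : R) : in01 x -> o - beta <= ramp_sum c x <= o + beta.
Proof.
  intros Hx. destruct (exists_cell d Hd x Hx) as [k [Hk Hkx]].
  rewrite (ramp_sum_cell c k x Hk Hkx).
  pose proof (Rabs_le_inv _ _ (ramp_abs_le L beta Hbeta0 (cell_left d k) (/ INR d) (c k) x)).
  pose proof (bump_range L beta Hbeta0 (cell_left d k) (/ INR d) x). lra.
Qed.

Lemma ramp_sum_lipschitz_cells (c : nat -> R) (i j : nat) (x y : R) :
  (i < j < d)%nat ->
  cell_left d i <= x <= cell_left d i + / INR d -> cell_left d j <= y <= cell_left d j + / INR d ->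
  Rabs (ramp_sum c x - ramp_sum c y) <= L * Rabs (x - y).
Proof.
  intros Hij Hx Hy.
  rewrite (ramp_sum_cell c i x), (ramp_sum_cell c j y) by (lia || assumption).
  pose proof (cell_left_le d Hd (S i) j ltac:(lia)). rewrite <- cell_left_S in H by exact Hd.
  destruct (ramp_abs_le_ends L beta HL Hbeta0 (cell_left d i) (/ INR d) (c i) x Hx) as [Hxe _].
  destruct (ramp_abs_le_ends L beta HL Hbeta0 (cell_left d j) (/ INR d) (c j) y Hy) as [_ Hye].
  rewrite (Rabs_left1 (x - y)) by lra.
  replace (o + ramp L beta (cell_left d i) (/ INR d) (c i) x -
          (o + ramp L beta (cell_left d j) (/ INR d) (c j) y)) with
          (ramp L beta (cell_left d i) (/ INR d) (c i) x +
           - ramp L beta (cell_left d j) (/ INR d) (c j) y) by ring.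
  eapply Rle_trans; [apply Rabs_triang|]. rewrite Rabs_Ropp. nra.
Qed.

Lemma ramp_sum_lipschitz (c : nat -> R) (x y : R) : in01 x -> in01 y ->
  Rabs (ramp_sum c x - ramp_sum c y) <= L * Rabs (x - y).
Proof.
  intros Hx Hy.
  destruct (exists_cell d Hd x Hx) as [i [Hi Hix]], (exists_cell d Hd y Hy) as [j [Hj Hjy]].
  destruct (Nat.lt_total i j) as [Hlt|[<-|Hgt]].
  - exact (ramp_sum_lipschitz_cells c i j x y ltac:(lia) Hix Hjy).
  - rewrite (ramp_sum_cell c i x), (ramp_sum_cell c i y) by assumption.
    replace (o + ramp L beta (cell_left d i) (/ INR d) (c i) x -
            (o + ramp L beta (cell_left d i) (/ INR d) (c i) y)) with
            (ramp L beta (cell_left d i) (/ INR d) (c i) x -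
             ramp L beta (cell_left d i) (/ INR d) (c i) y) by ring.
    apply (ramp_lipschitz L beta HL).
  - rewrite Rabs_minus_sym, (Rabs_minus_sym x).
    exact (ramp_sum_lipschitz_cells c j i y x ltac:(lia) Hjy Hix).
Qed.

(* Hence no two points of one cell are pseudo-shattered. *)
Lemma ramp_sum_cell_total (c1 c2 : nat -> R) (k : nat) : (k < d)%nat ->
  let in_cell x := cell_left d k <= x <= cell_left d k + / INR d in
  (forall x, in_cell x -> ramp_sum c1 x <= ramp_sum c2 x) \/
  (forall x, in_cell x -> ramp_sum c2 x <= ramp_sum c1 x).
Proof.
  intros Hk in_cell.
  destruct (Rle_dec (c1 k) (c2 k)) as [Hc|Hc]; [right|left]; intros x Hx;
    rewrite (ramp_sum_cell c1 k x), (ramp_sum_cell c2 k x) by assumption;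
    apply Rplus_le_compat_l, (ramp_antitone L beta HL); lra.
Qed.

Lemma ramp_class_pshatters : pshatters ramp_class d.
Proof.
  pose proof (cell_width_pos d Hd) as HW.
  set (mid k := cell_left d k + / INR d / 2).
  exists mid, (fun _ => o). split.
  - intros i Hi. pose proof (cell_in01 d Hd i Hi). unfold mid, in01. lra.
  - intros b. set (c k := if b k then mid k - 2 * beta / L else mid k + 2 * beta / L).
    exists (ramp_sum c). split; [exists c; reflexivity|].
    intros i Hi. rewrite (ramp_sum_cell c i (mid i) Hi) by (unfold mid; lra).
    assert (Hpeak : 0 < bump L beta (cell_left d i) (/ INR d) (mid i)).
    { unfold bump, mid. set (w := / INR d) in *.
      replace (L * (cell_left d i + w / 2 - cell_left d i)) with (L * (w / 2)) by field.
      replace (L * (cell_left d i + w - (cell_left d i + w / 2))) with (L * (w / 2)) by field.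
      assert (0 < L * (w / 2)) by (apply Rmult_lt_0_compat; lra).
      unfold Rmax, Rmin; repeat destruct Rle_dec; lra. }
    pose proof (bump_range L beta Hbeta0 (cell_left d i) (/ INR d) (mid i)).
    unfold ramp, c. set (e := bump L beta (cell_left d i) (/ INR d) (mid i)) in *.
    destruct (b i).
    + replace (L * (mid i - (mid i - 2 * beta / L))) with (2 * beta) by (field; lra).
      unfold Rmax, Rmin; repeat destruct Rle_dec; split; intros; (lra || reflexivity).
    + replace (L * (mid i - (mid i + 2 * beta / L))) with (- (2 * beta)) by (field; lra).
      unfold Rmax, Rmin; repeat destruct Rle_dec; split; intros; (lra || discriminate).
Qed.

Lemma ramp_class_pshatters_le (n : nat) : pshatters ramp_class n -> (n <= d)%nat.
Proof.
  intros [xs [rs [Hin Hsh]]]. apply Nat.nlt_ge. intros Hdn.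
  set (cell_of i := epsilon (inhabits 0%nat)
    (fun k => (k < d)%nat /\ cell_left d k <= xs i <= cell_left d k + / INR d)).
  assert (Hcell : forall i, (i < n)%nat ->
    (cell_of i < d)%nat /\ cell_left d (cell_of i) <= xs i <= cell_left d (cell_of i) + / INR d).
  { intros i Hi. apply epsilon_spec, exists_cell, Hin; assumption. }
  destruct (pigeonhole n d cell_of) as [i [j [Hi [Hj [Hij Heq]]]]];
    [intros i Hi; apply Hcell, Hi | exact Hdn|].
  destruct (Hcell i Hi) as [Hk Hxi], (Hcell j Hj) as [_ Hxj]. rewrite <- Heq in Hxj.
  destruct (Hsh (fun l => Nat.eqb l i)) as [f1 [[c1 ->] H1]].
  destruct (Hsh (fun l => Nat.eqb l j)) as [f2 [[c2 ->] H2]].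
  assert (A1 : rs i <= ramp_sum c1 (xs i)) by (apply H1; [exact Hi | apply Nat.eqb_refl]).
  assert (A2 : rs j <= ramp_sum c2 (xs j)) by (apply H2; [exact Hj | apply Nat.eqb_refl]).
  assert (B1 : ~ rs j <= ramp_sum c1 (xs j))
    by (intros C; apply (proj1 (H1 j Hj)), Nat.eqb_eq in C; auto).
  assert (B2 : ~ rs i <= ramp_sum c2 (xs i))
    by (intros C; apply (proj1 (H2 i Hi)), Nat.eqb_eq in C; auto).
  destruct (ramp_sum_cell_total c1 c2 (cell_of i) Hk) as [Hle|Hle].
  - apply B2. eapply Rle_trans; [exact A1 | exact (Hle _ Hxi)].
  - apply B1. eapply Rle_trans; [exact A2 | exact (Hle _ Hxj)].
Qed.

Lemma pdim_ramp_class : pdim_eq ramp_class d.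
Proof. split; [exact ramp_class_pshatters | exact ramp_class_pshatters_le]. Qed.

End RampClass.

(** * Dyadic binary search *)

Lemma half_pow_pos (k : nat) : 0 < (/ 2) ^ k.
Proof. apply pow_lt; lra. Qed.

Lemma half_pow_antitone (i j : nat) : (i <= j)%nat -> (/ 2) ^ j <= (/ 2) ^ i.
Proof.
  intros Hij. rewrite !pow_inv. apply Rinv_le_contravar; [apply pow_lt; lra|].
  apply Rle_pow; [lra | exact Hij].
Qed.

Section DyadicSearch.

Variables (W : R) (b : nat -> bool).
Hypothesis HW : 0 < W.

Definition dyadic_digit (j : nat) : R := if b j then W * (/ 2) ^ S j else 0.

(* Position of the binary search after [i] steps, relative to the left end of the cell. *)
Definition dyadic_offset (i : nat) : R := sumR i dyadic_digit.

Lemma geometric_sum_half (s n : nat) :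
  sumR n (fun j => W * (/ 2) ^ S (s + j)) = W * (/ 2) ^ s - W * (/ 2) ^ (s + n).
Proof.
  induction n as [|n IH]; cbn [sumR]; [rewrite Nat.add_0_r; lra|].
  rewrite IH, Nat.add_succ_r. simpl. field.
Qed.

Lemma dyadic_window_range (s n : nat) :
  0 <= sumR n (fun j => dyadic_digit (s + j)) <= W * (/ 2) ^ s - W * (/ 2) ^ (s + n).
Proof.
  rewrite <- (geometric_sum_half s n). split.
  - apply sumR_ge0. intros j _. unfold dyadic_digit.
    destruct (b _); [pose proof (half_pow_pos (S (s + j))); nra | lra].
  - apply sumR_le. intros j _. unfold dyadic_digit.
    destruct (b _); pose proof (half_pow_pos (S (s + j))); nra.
Qed.

Lemma dyadic_offset_split (i D : nat) : (i < D)%nat ->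
  exists tail, dyadic_offset D = dyadic_offset i + dyadic_digit i + tail /\
    0 <= tail <= W * (/ 2) ^ S i - W * (/ 2) ^ D.
Proof.
  intros HiD. exists (sumR (D - S i) (fun j => dyadic_digit (S i + j))). split.
  - unfold dyadic_offset. replace D with (S i + (D - S i))%nat at 1 by lia.
    rewrite sumR_add_range. reflexivity.
  - pose proof (dyadic_window_range (S i) (D - S i)) as Hwin.
    replace (S i + (D - S i))%nat with D in Hwin by lia. exact Hwin.
Qed.

(* The [i]-th query sits [delta] left of the midpoint of the current dyadic interval. *)
Lemma dyadic_query_separated (a : R) (i D : nat) : (i < D)%nat ->
  let q := a + dyadic_offset i + W * (/ 2) ^ S i - W * (/ 2) ^ S D in
  let c := a + dyadic_offset D in
  let delta := W * (/ 2) ^ S D in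
  a + delta <= q <= a + W - delta /\
  (b i = false -> c <= q - delta) /\ (b i = true -> q + delta <= c).
Proof.
  intros HiD q c delta.
  destruct (dyadic_window_range 0 i) as [Hoff0 Hoff1].
  change (sumR i (fun j => dyadic_digit (0 + j))) with (dyadic_offset i) in Hoff0, Hoff1.
  assert (0 < W * (/ 2) ^ i) by (pose proof (half_pow_pos i); nra).
  destruct (dyadic_offset_split i D HiD) as [tail [Hsplit [Htail0 Htail1]]].
  pose proof (half_pow_antitone (S i) D HiD).
  pose proof (half_pow_pos D).
  assert (W * (/ 2) ^ D <= W * (/ 2) ^ S i) by nra.
  assert (Hhalf : forall k, W * (/ 2) ^ S k = W * (/ 2) ^ k / 2) by (intros; simpl; field).
  assert (0 < delta) by (unfold delta; pose proof (half_pow_pos (S D)); nra).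
  unfold q, c, delta in *. rewrite !Hhalf in *.
  unfold dyadic_digit in Hsplit. simpl in Hoff1.
  repeat split; try lra; intros Hb; rewrite Hsplit, Hb, ?Hhalf; lra.
Qed.

End DyadicSearch.

(** * The adversary *)

(* [walk_potential sg s r] is [E g(s + S_r)] for a simple random walk [S_r] with [r]
   steps and [g x = x^2/sg - 4/27 x^4/sg^3] (expand with [E S_r^2 = r] and
   [E S_r^4 = 3r^2 - 2r]); [4/27] is the least coefficient for which [g x <= |x|]. *)
Definition walk_potential (sg s r : R) : R :=
  (s ^ 2 + r) / sg - 4 / 27 * (s ^ 4 + 6 * r * s ^ 2 + 3 * r ^ 2 - 2 * r) / sg ^ 3.

Lemma walk_potential_step (sg s r : R) : 0 < sg ->
  walk_potential sg (s + 1) (r - 1) + walk_potential sg (s - 1) (r - 1) = 2 * walk_potential sg s r.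
Proof. intros. unfold walk_potential. field. lra. Qed.

Lemma walk_potential_end_le (sg s : R) : 0 < sg -> walk_potential sg s 0 <= Rabs s.
Proof.
  intros Hsg. unfold walk_potential.
  replace (s ^ 2) with (Rabs s ^ 2) by (rewrite <- !Rsqr_pow2; symmetry; apply Rsqr_abs).
  replace (s ^ 4) with (Rabs s ^ 4) by (unfold Rabs; destruct Rcase_abs; ring).
  set (a := Rabs s). assert (Ha : 0 <= a) by apply Rabs_pos.
  assert (Hsg3 : 0 < sg ^ 3) by (apply pow_lt; exact Hsg).
  assert (Hgap : a - ((a ^ 2 + 0) / sg - 4 / 27 * (a ^ 4 + 6 * 0 * a ^ 2 + 3 * 0 ^ 2 - 2 * 0) / sg ^ 3)
                 = 4 / 27 * (a * ((a - 3 * sg / 2) ^ 2 * (a + 3 * sg))) / sg ^ 3)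
    by (field; lra).
  assert (0 <= 4 / 27 * (a * ((a - 3 * sg / 2) ^ 2 * (a + 3 * sg))) / sg ^ 3).
  { apply Rmult_le_pos; [|left; apply Rinv_0_lt_compat, Hsg3].
    apply Rmult_le_pos; [lra|]. apply Rmult_le_pos; [exact Ha|].
    apply Rmult_le_pos; [apply pow2_ge_0 | lra]. }
  lra.
Qed.

Lemma walk_potential_start_ge (sg : R) : 0 < sg -> 5 / 9 * sg <= walk_potential sg 0 (sg ^ 2).
Proof.
  intros Hsg. unfold walk_potential.
  replace ((0 ^ 2 + sg ^ 2) / sg - 4 / 27 * (0 ^ 4 + 6 * sg ^ 2 * 0 ^ 2 + 3 * (sg ^ 2) ^ 2 - 2 * sg ^ 2) / sg ^ 3)
    with (5 / 9 * sg + 8 / 27 / sg) by (field; lra).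
  assert (0 < 8 / 27 / sg) by (apply Rdiv_lt_0_compat; lra). lra.
Qed.

Definition agree (ys ys' : nat -> bool) (t : nat) : Prop := forall s, (s < t)%nat -> ys s = ys' s.

Definition set_label (ys : nat -> bool) (t : nat) (y : bool) : nat -> bool :=
  fun s => if Nat.eqb s t then y else ys s.

Lemma set_label_agree (ys : nat -> bool) (t : nat) (y : bool) : agree (set_label ys t y) ys t.
Proof. intros s Hs. unfold set_label. destruct (Nat.eqb_spec s t); [lia | reflexivity]. Qed.

Lemma agree_le (ys ys' : nat -> bool) (t t' : nat) : (t' <= t)%nat -> agree ys ys' t -> agree ys ys' t'.
Proof. intros Ht H s Hs. apply H. lia. Qed.

Lemma exists_labels_potential_ge (Phi : nat -> (nat -> bool) -> R) (N : nat) (ys0 : nat -> bool) :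
  (forall t ys, Phi (S t) (set_label ys t true) + Phi (S t) (set_label ys t false) = 2 * Phi t ys) ->
  exists ys, Phi 0%nat ys0 <= Phi N ys.
Proof.
  intros Havg. induction N as [|N [ys Hys]]; [exists ys0; lra|].
  specialize (Havg N ys).
  destruct (Rle_dec (Phi (S N) (set_label ys N false)) (Phi (S N) (set_label ys N true))).
  - exists (set_label ys N true). lra.
  - exists (set_label ys N false). lra.
Qed.

Lemma expected_mistakes_ge_prefix (A : learner) (xs : nat -> R) (ys : nat -> bool) (n T : nat) :
  valid_learner A -> (n <= T)%nat -> sumR n (exp_mistake A xs ys) <= expected_mistakes A xs ys T.
Proof.
  intros HA HnT. unfold expected_mistakes. replace T with (n + (T - n))%nat by lia.
  rewrite sumR_add_range.
  enough (0 <= sumR (T - n) (fun j => exp_mistake A xs ys (n + j)%nat)) by lra.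
  apply sumR_ge0. intros j _. unfold exp_mistake.
  destruct (HA (history xs ys (n + j)) (xs (n + j)%nat)). destruct (ys (n + j)%nat); lra.
Qed.

Section Adversary.

(* The adversary runs [d * D] phases of [m] rounds; phase [k * D + i] is step [i] of a
   binary search for a threshold inside cell [k]. *)
Variables (d D m : nat).
Hypotheses (Hd : (1 <= d)%nat) (HD : (1 <= D)%nat) (Hm : (1 <= m)%nat).

Let sqrt_m_pos : 0 < sqrt (INR m).
Proof. apply sqrt_lt_R0, lt_0_INR. lia. Qed.

Definition phase_sum (ys : nat -> bool) (p : nat) : R := sumR m (fun j => lab (ys (p * m + j)%nat)).

Definition phase_bit (ys : nat -> bool) (p : nat) : bool :=
  if Rle_dec 0 (phase_sum ys p) then false else true.

Definition cell_bits (ys : nat -> bool) (k : nat) : nat -> bool := fun i => phase_bit ys (k * D + i).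

Definition query (ys : nat -> bool) (k i : nat) : R :=
  cell_left d k + dyadic_offset (/ INR d) (cell_bits ys k) i
  + / INR d * (/ 2) ^ S i - / INR d * (/ 2) ^ S D.

Definition threshold (ys : nat -> bool) (k : nat) : R :=
  cell_left d k + dyadic_offset (/ INR d) (cell_bits ys k) D.

(* Rounds after the last full phase replay the first query. *)
Definition phase_of (t : nat) : nat := if Nat.ltb t (d * D * m) then (t / m)%nat else 0%nat.

Definition adv_point (ys : nat -> bool) (t : nat) : R :=
  query ys (phase_of t / D) (phase_of t mod D).

Lemma phase_of_bound (t : nat) : (phase_of t / D < d)%nat /\ (phase_of t mod D < D)%nat.
Proof.
  split; [|apply Nat.mod_upper_bound; lia].
  apply Nat.Div0.div_lt_upper_bound. unfold phase_of.
  destruct (Nat.ltb_spec t (d * D * m)); [|nia].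
  apply Nat.Div0.div_lt_upper_bound. nia.
Qed.

Lemma phase_of_le (t : nat) : (phase_of t * m <= t)%nat.
Proof.
  unfold phase_of. destruct (Nat.ltb t (d * D * m)); [|lia].
  rewrite Nat.mul_comm. apply Nat.Div0.mul_div_le.
Qed.

Lemma phase_of_in_phase (p j : nat) : (p < d * D)%nat -> (j < m)%nat -> phase_of (p * m + j) = p.
Proof.
  intros Hp Hj. unfold phase_of. destruct (Nat.ltb_spec (p * m + j) (d * D * m)); [|nia].
  rewrite Nat.div_add_l, Nat.div_small by lia. lia.
Qed.

Lemma phase_of_after (t : nat) : (d * D * m <= t)%nat -> phase_of t = 0%nat.
Proof. intros Ht. unfold phase_of. destruct (Nat.ltb_spec t (d * D * m)); [lia | reflexivity]. Qed.

Lemma query_in01 (ys : nat -> bool) (k i : nat) : (k < d)%nat -> (i < D)%nat -> in01 (query ys k i).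
Proof.
  intros Hk Hi. pose proof (cell_width_pos d Hd) as HW.
  destruct (dyadic_query_separated (/ INR d) (cell_bits ys k) HW (cell_left d k) i D Hi)
    as [[Hlo Hhi] _].
  pose proof (half_pow_pos (S D)). assert (0 < / INR d * (/ 2) ^ S D) by nra.
  pose proof (cell_in01 d Hd k Hk). unfold query, in01. lra.
Qed.

Lemma adv_point_in01 (ys : nat -> bool) (t : nat) : in01 (adv_point ys t).
Proof. destruct (phase_of_bound t). apply query_in01; assumption. Qed.

Lemma ramp_sum_threshold_at_query (L beta : R) (ys : nat -> bool) (k i : nat) :
  0 < L -> 0 < beta -> (k < d)%nat -> (i < D)%nat -> beta <= L * (/ INR d * (/ 2) ^ S D) ->
  ramp_sum 0 L beta d (threshold ys) (query ys k i) =
  if phase_bit ys (k * D + i) then - beta else beta.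
Proof.
  intros HL Hbeta Hk Hi Hsep. pose proof (cell_width_pos d Hd) as HW.
  destruct (dyadic_query_separated (/ INR d) (cell_bits ys k) HW (cell_left d k) i D Hi)
    as [[Hlo Hhi] [Hright Hleft]].
  fold (query ys k i) (threshold ys k) in Hlo, Hhi, Hright, Hleft.
  set (delta := / INR d * (/ 2) ^ S D) in *.
  assert (0 < delta) by (unfold delta; pose proof (half_pow_pos (S D)); nra).
  rewrite (ramp_sum_cell 0 L beta d HL Hbeta Hd (threshold ys) k) by (auto; lra).
  assert (Hpeak : bump L beta (cell_left d k) (/ INR d) (query ys k i) = beta).
  { assert (beta <= L * (query ys k i - cell_left d k)) by nra.
    assert (beta <= L * (cell_left d k + / INR d - query ys k i)) by nra.
    unfold bump, Rmax, Rmin; repeat destruct Rle_dec; lra. }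
  unfold ramp. rewrite Hpeak. unfold cell_bits in Hright, Hleft.
  destruct (phase_bit ys (k * D + i)).
  - specialize (Hleft eq_refl).
    assert (L * (query ys k i - threshold ys k) <= - beta) by nra.
    unfold Rmax, Rmin; repeat destruct Rle_dec; lra.
  - specialize (Hright eq_refl).
    assert (beta <= L * (query ys k i - threshold ys k)) by nra.
    unfold Rmax, Rmin; repeat destruct Rle_dec; lra.
Qed.

Lemma phase_bit_agree (ys ys' : nat -> bool) (p : nat) :
  agree ys ys' (S p * m) -> phase_bit ys p = phase_bit ys' p.
Proof.
  intros H. unfold phase_bit, phase_sum.
  rewrite (sumR_ext m _ (fun j => lab (ys' (p * m + j)%nat))); [reflexivity|].
  intros j Hj. rewrite H by (simpl; nia). reflexivity.
Qed.

Lemma query_agree (ys ys' : nat -> bool) (k i : nat) :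
  agree ys ys' ((k * D + i) * m) -> query ys k i = query ys' k i.
Proof.
  intros H. unfold query, dyadic_offset.
  rewrite (sumR_ext i _ (dyadic_digit (/ INR d) (cell_bits ys' k))); [reflexivity|].
  intros j Hj. unfold dyadic_digit, cell_bits.
  rewrite (phase_bit_agree ys ys'); [reflexivity|]. apply (agree_le _ _ ((k * D + i) * m)); [nia | exact H].
Qed.

Lemma adv_point_agree (ys ys' : nat -> bool) (t : nat) :
  agree ys ys' t -> adv_point ys t = adv_point ys' t.
Proof.
  intros H. unfold adv_point. apply query_agree, (agree_le _ _ t); [|exact H].
  pose proof (phase_of_le t). pose proof (Nat.div_mod_eq (phase_of t) D). nia.
Qed.

Lemma history_agree (ys ys' : nat -> bool) (t : nat) :
  agree ys ys' t -> history (adv_point ys) ys t = history (adv_point ys') ys' t.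
Proof.
  intros H. unfold history. apply map_ext_in. intros s Hs. apply in_seq in Hs.
  rewrite (adv_point_agree ys ys' s), H; [reflexivity | lia |].
  apply (agree_le _ _ t); [lia | exact H].
Qed.

Section Learner.

Variable A : learner.

Definition adv_mistake (ys : nat -> bool) (t : nat) : R := exp_mistake A (adv_point ys) ys t.

Lemma adv_mistake_agree (ys ys' : nat -> bool) (t : nat) :
  agree ys ys' (S t) -> adv_mistake ys t = adv_mistake ys' t.
Proof.
  intros H. assert (Ht : agree ys ys' t) by (apply (agree_le _ _ (S t)); [lia | exact H]).
  unfold adv_mistake, exp_mistake.
  rewrite (history_agree ys ys' t Ht), (adv_point_agree ys ys' t Ht), (H t) by lia.
  reflexivity.
Qed.

Lemma adv_mistake_set_label (ys : nat -> bool) (t : nat) :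
  adv_mistake (set_label ys t true) t + adv_mistake (set_label ys t false) t = 1.
Proof.
  unfold adv_mistake, exp_mistake.
  rewrite (history_agree (set_label ys t true) ys t), (history_agree (set_label ys t false) ys t),
    (adv_point_agree (set_label ys t true) ys t), (adv_point_agree (set_label ys t false) ys t)
    by apply set_label_agree.
  unfold set_label. rewrite Nat.eqb_refl. ring.
Qed.

Definition phase_prefix (ys : nat -> bool) (p t : nat) : R :=
  sumR (Nat.min m (t - p * m)) (fun j => lab (ys (p * m + j)%nat)).

Definition phase_remaining (p t : nat) : R := INR (m - Nat.min m (t - p * m)).

Definition potential (t : nat) (ys : nat -> bool) : R :=
  sumR t (fun s => adv_mistake ys s - / 2) +
  / 2 * sumR (d * D) (fun p => walk_potential (sqrt (INR m)) (phase_prefix ys p t) (phase_remaining p t)).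

Lemma phase_prefix_agree (ys ys' : nat -> bool) (p t : nat) :
  agree ys ys' t -> phase_prefix ys p t = phase_prefix ys' p t.
Proof. intros H. apply sumR_ext. intros j Hj. rewrite H by lia. reflexivity. Qed.

Lemma potential_agree (ys ys' : nat -> bool) (t : nat) : agree ys ys' t -> potential t ys = potential t ys'.
Proof.
  intros H. unfold potential. f_equal.
  - apply sumR_ext. intros s Hs. rewrite (adv_mistake_agree ys ys'); [reflexivity|].
    apply (agree_le _ _ t); [lia | exact H].
  - f_equal. apply sumR_ext. intros p _. rewrite (phase_prefix_agree ys ys' p t H). reflexivity.
Qed.

Lemma phase_walk_step (sg : R) (ys : nat -> bool) (p t : nat) : 0 < sg ->
  walk_potential sg (phase_prefix (set_label ys t true) p (S t)) (phase_remaining p (S t)) +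
  walk_potential sg (phase_prefix (set_label ys t false) p (S t)) (phase_remaining p (S t)) =
  2 * walk_potential sg (phase_prefix ys p t) (phase_remaining p t).
Proof.
  intros Hsg. unfold phase_prefix.
  assert (Hold : forall y n, (n <= t - p * m)%nat ->
            sumR n (fun j => lab (set_label ys t y (p * m + j)%nat)) = sumR n (fun j => lab (ys (p * m + j)%nat))).
  { intros y n Hn. apply sumR_ext. intros j Hj. rewrite set_label_agree by lia. reflexivity. }
  assert (Hcase : (p * m <= t < p * m + m)%nat \/ ~ (p * m <= t < p * m + m)%nat) by lia.
  destruct Hcase as [Hin|Hout].
  - unfold phase_remaining.
    replace (Nat.min m (S t - p * m)) with (S (t - p * m)) by lia.
    replace (Nat.min m (t - p * m)) with (t - p * m)%nat by lia.
    cbn [sumR]. rewrite !Hold by lia.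
    unfold set_label. replace (p * m + (t - p * m))%nat with t by lia. rewrite Nat.eqb_refl.
    replace (INR (m - (t - p * m))) with (INR (m - S (t - p * m)) + 1)
      by (rewrite <- S_INR; f_equal; lia).
    pose proof (walk_potential_step sg (sumR (t - p * m) (fun j => lab (ys (p * m + j)%nat)))
                  (INR (m - S (t - p * m)) + 1) Hsg) as Hstep.
    replace (INR (m - S (t - p * m)) + 1 - 1) with (INR (m - S (t - p * m))) in Hstep by ring.
    simpl lab. replace (_ + -1) with (sumR (t - p * m) (fun j => lab (ys (p * m + j)%nat)) - 1) by ring.
    exact Hstep.
  - assert (Hmin : Nat.min m (S t - p * m) = Nat.min m (t - p * m)) by lia.
    unfold phase_remaining. rewrite Hmin, !Hold by lia. ring.
Qed.

Lemma potential_step (t : nat) (ys : nat -> bool) :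
  potential (S t) (set_label ys t true) + potential (S t) (set_label ys t false) = 2 * potential t ys.
Proof.
  unfold potential. cbn [sumR].
  assert (Hpast : forall y, sumR t (fun s => adv_mistake (set_label ys t y) s - / 2) =
                            sumR t (fun s => adv_mistake ys s - / 2)).
  { intros y. apply sumR_ext. intros s Hs. rewrite (adv_mistake_agree _ ys s); [reflexivity|].
    apply (agree_le _ _ t); [lia | apply set_label_agree]. }
  rewrite !Hpast. pose proof (adv_mistake_set_label ys t) as Hnow.
  assert (Hwalk := sumR_ext (d * D) _ _ (fun p _ => phase_walk_step (sqrt (INR m)) ys p t sqrt_m_pos)).
  rewrite sumR_add, sumR_scal in Hwalk. lra.
Qed.

Lemma potential_start (ys : nat -> bool) :
  potential 0 ys = / 2 * (INR (d * D) * walk_potential (sqrt (INR m)) 0 (INR m)).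
Proof.
  unfold potential. cbn [sumR]. rewrite Rplus_0_l, <- sumR_const. f_equal.
  apply sumR_ext. intros p _. unfold phase_prefix, phase_remaining.
  rewrite Nat.sub_0_l, Nat.min_0_r, Nat.sub_0_r. reflexivity.
Qed.

Lemma potential_end_le (ys : nat -> bool) :
  potential (d * D * m) ys <=
  sumR (d * D * m) (adv_mistake ys) - INR (d * D * m) / 2 +
  / 2 * sumR (d * D) (fun p => Rabs (phase_sum ys p)).
Proof.
  unfold potential.
  rewrite (sumR_ext (d * D * m) _ (fun s => adv_mistake ys s + - / 2)) by (intros; ring).
  rewrite sumR_add, sumR_const.
  enough (sumR (d * D) (fun p => walk_potential (sqrt (INR m)) (phase_prefix ys p (d * D * m))
                                   (phase_remaining p (d * D * m))) <=
          sumR (d * D) (fun p => Rabs (phase_sum ys p))) by lra.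
  apply sumR_le. intros p Hp. unfold phase_prefix, phase_remaining.
  replace (Nat.min m (d * D * m - p * m)) with m by nia.
  rewrite Nat.sub_diag. apply walk_potential_end_le, sqrt_m_pos.
Qed.

End Learner.

(* [(m - |phase_sum ys p|) / 2] is the number of minority labels of phase [p]. *)
Lemma phase_margin_errors (beta gamma : R) (ys : nat -> bool) (p : nat) : 0 < gamma < beta ->
  sumR m (fun j => if Rle_dec (lab (ys (p * m + j)%nat) * (if phase_bit ys p then - beta else beta)) gamma
                   then 1 else 0) =
  (INR m - Rabs (phase_sum ys p)) / 2.
Proof.
  intros Hgb. unfold phase_bit. fold (phase_sum ys p).
  unfold phase_sum. set (S := sumR m (fun j => lab (ys (p * m + j)%nat))).
  destruct (Rle_dec 0 S) as [Hs|Hs].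
  - rewrite (sumR_ext m _ (fun j => / 2 * 1 + (- / 2) * lab (ys (p * m + j)%nat))).
    + rewrite sumR_add, !sumR_scal, sumR_const. fold S. rewrite Rabs_pos_eq by lra. lra.
    + intros j _. destruct (ys (p * m + j)%nat); simpl lab; destruct Rle_dec; lra.
  - rewrite (sumR_ext m _ (fun j => / 2 * 1 + / 2 * lab (ys (p * m + j)%nat))).
    + rewrite sumR_add, !sumR_scal, sumR_const. fold S. rewrite Rabs_left by lra. lra.
    + intros j _. destruct (ys (p * m + j)%nat); simpl lab; destruct Rle_dec; lra.
Qed.

Lemma comparator_at_adv_point (L beta : R) (ys : nat -> bool) (t : nat) :
  0 < L -> 0 < beta -> beta <= L * (/ INR d * (/ 2) ^ S D) ->
  ramp_sum 0 L beta d (threshold ys) (adv_point ys t) =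
  if phase_bit ys (phase_of t) then - beta else beta.
Proof.
  intros HL Hbeta Hsep. destruct (phase_of_bound t) as [Hk Hi].
  unfold adv_point. rewrite ramp_sum_threshold_at_query by assumption.
  rewrite (Nat.mul_comm _ D), <- Nat.div_mod_eq. reflexivity.
Qed.

Lemma comparator_margin_loss (L beta gamma : R) (ys : nat -> bool) (T : nat) :
  0 < L -> 0 < gamma < beta -> beta <= L * (/ INR d * (/ 2) ^ S D) -> (d * D * m <= T)%nat ->
  (forall t, (d * D * m <= t)%nat -> ys t = negb (phase_bit ys 0)) ->
  INR (margin_loss gamma (ramp_sum 0 L beta d (threshold ys)) (adv_point ys) ys T) =
  INR (d * D * m) / 2 - / 2 * sumR (d * D) (fun p => Rabs (phase_sum ys p)).
Proof.
  intros HL Hgb Hsep HT Htail.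
  rewrite margin_loss_sumR. replace T with (d * D * m + (T - d * D * m))%nat by lia.
  rewrite sumR_add_range, sumR_mul_range.
  rewrite (sumR_ext (T - d * D * m) _ (fun _ => 0)).
  2:{ intros j _. rewrite comparator_at_adv_point, phase_of_after, Htail by (lia || lra).
      destruct (phase_bit ys 0); simpl lab; destruct Rle_dec; lra. }
  rewrite (sumR_ext (d * D) _ (fun p => (INR m - Rabs (phase_sum ys p)) / 2)).
  2:{ intros p Hp. rewrite <- (phase_margin_errors beta gamma ys p Hgb).
      apply sumR_ext. intros j Hj.
      rewrite comparator_at_adv_point, phase_of_in_phase by (lia || lra). reflexivity. }
  rewrite sumR_const, Rmult_0_r, Rplus_0_r, mult_INR.
  rewrite (sumR_ext (d * D) _ (fun p => / 2 * INR m + (- / 2) * Rabs (phase_sum ys p)))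
    by (intros; unfold Rdiv; ring).
  rewrite sumR_add, sumR_const, sumR_scal. lra.
Qed.

(* After the last full phase the labels agree with the comparator, so these rounds cost it nothing. *)
Definition pad_labels (ys : nat -> bool) (t : nat) : bool :=
  if Nat.ltb t (d * D * m) then ys t else negb (phase_bit ys 0).

Lemma pad_labels_agree (ys : nat -> bool) : agree (pad_labels ys) ys (d * D * m).
Proof. intros s Hs. unfold pad_labels. destruct (Nat.ltb_spec s (d * D * m)); [reflexivity | lia]. Qed.

Lemma pad_labels_tail (ys : nat -> bool) (t : nat) : (d * D * m <= t)%nat ->
  pad_labels ys t = negb (phase_bit (pad_labels ys) 0).
Proof.
  intros Ht. rewrite (phase_bit_agree (pad_labels ys) ys).
  - unfold pad_labels. destruct (Nat.ltb_spec t (d * D * m)); [lia | reflexivity].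
  - apply (agree_le _ _ (d * D * m)); [|apply pad_labels_agree]; assert (1 <= d * D)%nat by nia; nia.
Qed.

Lemma adversary_regret (A : learner) (L gamma : R) (T : nat) :
  valid_learner A -> 0 < L -> 0 < gamma ->
  5 / 4 * gamma <= L * (/ INR d * (/ 2) ^ S D) -> (d * D * m <= T)%nat ->
  exists (xs : nat -> R) (ys : nat -> bool), (forall t, in01 (xs t)) /\
    expected_mistakes A xs ys T - INR (OPT_margin (ramp_class 0 L (5 / 4 * gamma) d) gamma xs ys T)
      >= 5 / 18 * INR (d * D) * sqrt (INR m).
Proof.
  intros HA HL Hgamma Hsep HT. set (beta := 5 / 4 * gamma) in *.
  destruct (exists_labels_potential_ge (potential A) (d * D * m) (fun _ => true)
              (potential_step A)) as [ys0 Hgrow].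
  set (ys := pad_labels ys0).
  rewrite <- (potential_agree A ys ys0 _ (pad_labels_agree ys0)) in Hgrow.
  exists (adv_point ys), ys. split; [exact (adv_point_in01 ys)|].
  assert (Hopt : INR (OPT_margin (ramp_class 0 L beta d) gamma (adv_point ys) ys T) <=
                 INR (d * D * m) / 2 - / 2 * sumR (d * D) (fun p => Rabs (phase_sum ys p))).
  { rewrite <- (comparator_margin_loss L beta gamma ys T) by
      (unfold beta in *; try lra; try lia; apply pad_labels_tail).
    apply le_INR, nat_min_le. exists (ramp_sum 0 L beta d (threshold ys)).
    split; [exists (threshold ys); reflexivity | reflexivity]. }
  pose proof (expected_mistakes_ge_prefix A (adv_point ys) ys _ T HA HT) as Hmist.
  pose proof (potential_end_le A ys) as Hend.
  rewrite potential_start in Hgrow.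
  pose proof (walk_potential_start_ge (sqrt (INR m)) sqrt_m_pos) as Hstart.
  rewrite pow2_sqrt in Hstart by apply pos_INR.
  assert (INR (d * D) * (5 / 9 * sqrt (INR m)) <= INR (d * D) * walk_potential (sqrt (INR m)) 0 (INR m))
    by (apply Rmult_le_compat_l; [apply pos_INR | exact Hstart]).
  change (sumR (d * D * m) (adv_mistake A ys)) with
    (sumR (d * D * m) (exp_mistake A (adv_point ys) ys)) in Hend.
  lra.
Qed.

End Adversary.

(** * Choice of the scales *)

Lemma ramp_class_admissible (o L beta : R) (d : nat) :
  0 < L -> 0 < beta -> (1 <= d)%nat -> -1 <= o - beta -> o + beta <= 1 ->
  (forall f, ramp_class o L beta d f ->
     (forall x, in01 x -> -1 <= f x <= 1) /\
     (forall x y, in01 x -> in01 y -> Rabs (f x - f y) <= L * Rabs (x - y))) /\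
  pdim_eq (ramp_class o L beta d) d.
Proof.
  intros HL Hbeta Hd Hlo Hhi. split; [|exact (pdim_ramp_class o L beta d HL Hbeta Hd)].
  intros f [c ->]. split.
  - intros x Hx. pose proof (ramp_sum_range o L beta d HL Hbeta Hd c x Hx). lra.
  - intros x y Hx Hy. exact (ramp_sum_lipschitz o L beta d HL Hbeta Hd c x y Hx Hy).
Qed.

Lemma regret_ge0_of_margin (F : (R -> R) -> Prop) (f : R -> R) (gamma : R) (A : learner) (T : nat) :
  valid_learner A -> F f -> gamma < f 0 ->
  exists (xs : nat -> R) (ys : nat -> bool), (forall t, in01 (xs t)) /\
    expected_mistakes A xs ys T - INR (OPT_margin F gamma xs ys T) >= 0.
Proof.
  intros HA Hf Hmargin. exists (fun _ => 0), (fun _ => true). split; [intros; unfold in01; lra|].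
  assert (Hopt : (OPT_margin F gamma (fun _ => 0%R) (fun _ => true) T <=
                  margin_loss gamma f (fun _ => 0%R) (fun _ => true) T)%nat)
    by (apply nat_min_le; exists f; split; [exact Hf | reflexivity]).
  apply le_INR in Hopt. rewrite margin_loss_sumR in Hopt.
  rewrite (sumR_ext T _ (fun _ => 0)), sumR_const, Rmult_0_r in Hopt.
  2:{ intros t _. destruct Rle_dec as [Hle|]; [simpl in Hle; lra | reflexivity]. }
  pose proof (expected_mistakes_ge_prefix A (fun _ => 0) (fun _ => true) 0 T HA ltac:(lia)).
  simpl sumR in *. lra.
Qed.

Lemma exists_search_depth (N d : nat) : (1 <= d)%nat -> (d < N)%nat ->
  exists D, (1 <= D)%nat /\ (d * 2 ^ (D - 1) <= N - 1 < d * 2 ^ D)%nat.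
Proof.
  intros Hd HdN. set (q := ((N - 1) / d)%nat).
  assert (Hq : (1 <= q)%nat) by (apply Nat.div_str_pos; lia).
  destruct (Nat.log2_spec q Hq) as [Hlo Hhi].
  exists (S (Nat.log2 q)). split; [lia|]. rewrite Nat.sub_succ, Nat.sub_0_r. split.
  - apply (Nat.le_trans _ (d * q)); [nia | apply Nat.Div0.mul_div_le].
  - pose proof (Nat.div_mod_eq (N - 1) d). pose proof (Nat.mod_upper_bound (N - 1) d ltac:(lia)).
    fold q in H. nia.
Qed.

Lemma ln2_lt_1 : ln 2 < 1.
Proof.
  rewrite <- ln_exp. apply ln_increasing; [lra|].
  pose proof (exp_ineq1 1 ltac:(lra)). lra.
Qed.

Lemma sqrt_32_over_PI_ge : 5 / 2 <= sqrt (32 / PI).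
Proof.
  pose proof PI_4. pose proof PI_RGT_0.
  rewrite <- (sqrt_pow2 (5 / 2)) by lra. apply sqrt_le_1_alt.
  apply Rmult_le_reg_r with PI; [lra|]. unfold Rdiv. rewrite Rmult_assoc, Rinv_l by lra. lra.
Qed.

Lemma covering_number01_gap (gamma L : R) : 0 < gamma -> 0 < L ->
  5 * gamma * (INR (covering_number01 (sqrt (32 / PI) * (gamma / L))) - 1) <= L.
Proof.
  intros Hgamma HL. pose proof sqrt_32_over_PI_ge as Hs. set (s := sqrt (32 / PI)) in *.
  assert (Hr : 0 < s * (gamma / L)) by (apply Rmult_lt_0_compat; [lra | apply Rdiv_lt_0_compat; lra]).
  pose proof (covering_number01_le _ Hr) as Hcov.
  set (N := INR (covering_number01 (s * (gamma / L)))) in *.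
  replace (/ (2 * (s * (gamma / L)))) with (L / (2 * s * gamma)) in Hcov by (field; lra).
  apply Rle_trans with (5 * gamma * (L / (2 * s * gamma))); [nra|].
  replace (5 * gamma * (L / (2 * s * gamma))) with (5 / 2 * L / s) by (field; lra).
  apply Rmult_le_reg_r with s; [lra|]. replace (5 / 2 * L / s * s) with (5 / 2 * L) by (field; lra).
  nra.
Qed.

Lemma depth_separation (gamma L : R) (N d D : nat) :
  0 < gamma -> (1 <= d)%nat -> (1 <= D)%nat -> 5 * gamma * (INR N - 1) <= L ->
  (d * 2 ^ (D - 1) <= N - 1)%nat -> 5 / 4 * gamma <= L * (/ INR d * (/ 2) ^ S D).
Proof.
  intros Hgamma Hd HD Hgap Hdepth. pose proof (lt_0_INR d ltac:(lia)) as Hdpos.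
  assert (Hpow : 0 < 2 ^ (D - 1)) by (apply pow_lt; lra).
  assert (HN : (1 <= N)%nat) by (pose proof (Nat.pow_nonzero 2 (D - 1)); nia).
  apply le_INR in Hdepth. rewrite mult_INR, pow_INR, minus_INR in Hdepth by exact HN.
  simpl INR in Hdepth. replace (1 + 1) with 2 in Hdepth by ring.
  replace (S D) with (2 + (D - 1))%nat by lia. rewrite pow_inv, pow_add.
  apply Rmult_le_reg_r with (INR d * (4 * 2 ^ (D - 1))); [nra|].
  replace (L * (/ INR d * / (2 ^ 2 * 2 ^ (D - 1))) * (INR d * (4 * 2 ^ (D - 1)))) with L
    by (simpl; field; lra).
  nra.
Qed.

Lemma ln_ratio_le_depth (N d D : nat) : (1 <= d)%nat -> (1 <= N)%nat -> (N <= d * 2 ^ D)%nat ->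
  ln (INR N / INR d) <= INR D.
Proof.
  intros Hd HN HNd. pose proof (lt_0_INR d ltac:(lia)) as Hdpos.
  apply le_INR in HNd. rewrite mult_INR, pow_INR in HNd. simpl INR in HNd.
  replace (1 + 1) with 2 in HNd by ring.
  assert (Hratio : INR N / INR d <= 2 ^ D).
  { apply Rmult_le_reg_r with (INR d); [lra|]. unfold Rdiv. rewrite Rmult_assoc, Rinv_l by lra. lra. }
  assert (0 < INR N / INR d) by (apply Rdiv_lt_0_compat; [apply lt_0_INR; lia | lra]).
  apply Rle_trans with (ln (2 ^ D)).
  - destruct (Rle_lt_or_eq_dec _ _ Hratio) as [Hlt|Heq];
      [left; apply ln_increasing; assumption | rewrite Heq; lra].
  - rewrite ln_pow by lra. pose proof ln2_lt_1. pose proof (pos_INR D). nra.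
Qed.

(* [D] is the deepest binary search whose final gaps [delta] still satisfy
   [L delta >= 5/4 gamma]. *)
Lemma exists_search_scale (gamma L : R) (d : nat) :
  0 < gamma -> 0 < L -> (1 <= d)%nat ->
  let N := covering_number01 (sqrt (32 / PI) * (gamma / L)) in (d < N)%nat ->
  exists D, (1 <= D)%nat /\ 5 / 4 * gamma <= L * (/ INR d * (/ 2) ^ S D) /\
            ln (INR N / INR d) <= INR D.
Proof.
  intros Hgamma HL Hd N HdN.
  destruct (exists_search_depth N d Hd HdN) as [D [HD [Hlo Hhi]]].
  exists D. split; [exact HD | split].
  - exact (depth_separation gamma L N d D Hgamma Hd HD (covering_number01_gap gamma L Hgamma HL) Hlo).
  - apply ln_ratio_le_depth; lia.
Qed.

Lemma sqrt_rate_le (T n : nat) (ell : R) : (1 <= n)%nat -> (n <= T)%nat -> ell <= INR n ->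
  1 / 10 * sqrt (INR T * ell) <= 5 / 18 * INR n * sqrt (INR (T / n)).
Proof.
  intros Hn HnT Hell. set (m := (T / n)%nat).
  assert (Hm : (1 <= m)%nat) by (apply Nat.div_str_pos; lia).
  assert (HT : (T <= 2 * n * m)%nat).
  { pose proof (Nat.div_mod_eq T n). pose proof (Nat.mod_upper_bound T n ltac:(lia)). fold m in H. nia. }
  apply le_INR in HT. rewrite !mult_INR in HT. simpl INR in HT. replace (1 + 1) with 2 in HT by ring.
  pose proof (pos_INR T). pose proof (pos_INR n). pose proof (sqrt_pos (INR m)).
  pose proof (sqrt_sqrt (INR m) (pos_INR m)).
  assert (Hsq : INR T * ell <= (2 * INR n * sqrt (INR m)) ^ 2).
  { apply Rle_trans with (INR T * INR n); [apply Rmult_le_compat_l; assumption|]. nra. }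
  apply sqrt_le_1_alt in Hsq. rewrite sqrt_pow2 in Hsq by nra. nra.
Qed.

Theorem theorem13 :
  exists c : R, 0 < c /\
  forall (gamma L : R) (d : nat),
    0 < gamma < 1/2 -> 0 < L ->
    let N := covering_number01 (sqrt (32 / PI) * (gamma / L)) in
    (1 <= d)%nat -> (d <= N)%nat ->
    exists F : (R -> R) -> Prop,
      (forall f, F f ->
         (forall x, in01 x -> -1 <= f x <= 1) /\
         (forall x y, in01 x -> in01 y -> Rabs (f x - f y) <= L * Rabs (x - y))) /\
      pdim_eq F d /\
      exists T0 : nat, forall T : nat, (T0 <= T)%nat ->
      forall A : learner, valid_learner A ->
      exists (xs : nat -> R) (ys : nat -> bool),
        (forall t, in01 (xs t)) /\
        expected_mistakes A xs ys T - INR (OPT_margin F gamma xs ys T)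
          >= c * sqrt (INR T * INR d * ln (INR N / INR d)).
Proof.
  exists (1 / 10). split; [lra|].
  intros gamma L d Hgamma HL N Hd HdN. pose proof (lt_0_INR d ltac:(lia)) as Hdpos.
  destruct (Nat.eq_dec N d) as [HNd|HNd].
  - set (eps := (1 / 2 - gamma) / 2).
    exists (ramp_class (1 / 2) L eps d).
    destruct (ramp_class_admissible (1 / 2) L eps d) as [Hadm Hpdim]; try (unfold eps; lra); auto.
    split; [exact Hadm | split; [exact Hpdim|]]. exists 0%nat. intros T _ A HA.
    rewrite HNd, Rdiv_diag, ln_1, Rmult_0_r, sqrt_0, Rmult_0_r by lra.
    apply (regret_ge0_of_margin _ (ramp_sum (1 / 2) L eps d (fun _ => 0)) gamma A T HA);
      [exists (fun _ => 0); reflexivity|].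
    pose proof (ramp_sum_range (1 / 2) L eps d HL ltac:(unfold eps; lra) Hd (fun _ => 0) 0
                  ltac:(unfold in01; lra)).
    unfold eps in *. lra.
  - destruct (exists_search_scale gamma L d ltac:(lra) HL Hd ltac:(fold N; lia)) as [D [HD [Hsep Hln]]].
    exists (ramp_class 0 L (5 / 4 * gamma) d).
    destruct (ramp_class_admissible 0 L (5 / 4 * gamma) d) as [Hadm Hpdim]; try lra; auto.
    split; [exact Hadm | split; [exact Hpdim|]]. exists (d * D)%nat. intros T HT A HA.
    assert (HdD : (1 <= d * D)%nat) by nia.
    assert (Hm : (1 <= T / (d * D))%nat) by (apply Nat.div_str_pos; lia).
    destruct (adversary_regret d D (T / (d * D)) Hd HD Hm A L gamma T HA) as [xs [ys [Hxs Hregret]]];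
      try lra; [apply Nat.Div0.mul_div_le|].
    exists xs, ys. split; [exact Hxs|]. apply Rge_trans with (1 := Hregret), Rle_ge.
    rewrite Rmult_assoc. apply sqrt_rate_le; [lia | lia|].
    rewrite mult_INR. apply Rmult_le_compat_l; [lra | exact Hln].
Qed.
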